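(* Let $X$ be a path-connected topological space admitting a universal cover, $\mathbb A$ an abelian group, $\mathfrak a\in H^1(X;\mathbb A)$, $\alpha$ a singular one-cocycle representing $\mathfrak a$ and $x\in X$. Then: (1) $\mathfrak G_{x,\alpha}$ is a two-cocycle on $\mathrm{Homeo}(X,\mathfrak a)$, i.e. for all $g,h,k\in\mathrm{Homeo}(X,\mathfrak a)$, $$\mathfrak G_{x,\alpha}(h,k)-\mathfrak G_{x,\alpha}(gh,k)+\mathfrak G_{x,\alpha}(g,hk)-\mathfrak G_{x,\alpha}(g,h)=0;$$ (2) the value $\mathfrak G_{x,\alpha}(g,h)$ does not depend on the choice of the path from $x$ to $hx$; (3) the cohomology class of $\mathfrak G_{x,\alpha}$ depends neither on the reference point $x$ nor on the cocycle $\alpha$ representing $\mathfrak a$; (4) if either $g^*\alpha=\alpha$ or $hx=x$, then $\mathfrak G_{x,\alpha}(g,h)=0$.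
   Context: $\mathrm{Homeo}(X,\mathfrak a)$ is the group of homeomorphisms $g$ of $X$ with $g^*\mathfrak a=\mathfrak a$. $\mathfrak G_{x,\alpha}(g,h):=\int_\gamma g^*\alpha-\alpha$, where $\gamma$ is a path from $x$ to $hx$ and $\int_\gamma\sigma$ denotes the natural pairing of the chain $\gamma$ with the cochain $\sigma$. The cohomology class in (3) is in the group cohomology of $\mathrm{Homeo}(X,\mathfrak a)$ as a discrete group with trivial coefficients $\mathbb A$. *)

From HB Require Import structures.
From mathcomp Require Import all_boot all_order all_algebra.
From mathcomp Require Import all_classical all_reals all_analysis.
From mathcomp Require Import ring lra subtype_topology.
Import numFieldNormedType.Exports.
Set Implicit Arguments. Unset Strict Implicit. Unset Printing Implicit Defensive.
Import Order.TTheory GRing.Theory Num.Theory.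
Local Open Scope classical_set_scope.
Local Open Scope ring_scope.

Section Simplices.
Variable R : realType.

Definition std1 : set R := [set t | 0 <= t <= 1].
Definition std2 : set (R * R) := [set p | 0 <= p.1 /\ 0 <= p.2 /\ p.1 + p.2 <= 1].

Local Notation simplex1 := (set_type std1).
Local Notation simplex2 := (set_type std2).

Lemma std1_0 : (0 : R) \in std1.
Proof. by apply/mem_set; rewrite /std1 /= lexx ler01. Qed.
Lemma std1_1 : (1 : R) \in std1.
Proof. by apply/mem_set; rewrite /std1 /= lexx ler01. Qed.

Definition vtx0 : simplex1 := SigSub std1_0.
Definition vtx1 : simplex1 := SigSub std1_1.

Lemma face0P (t : simplex1) : (1 - val t, val t) \in std2.
Proof.
case: t => t /set_mem /= /andP[t0 t1]; apply/mem_set; rewrite /std2 /=.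
split; [|split]; lra.
Qed.
Lemma face1P (t : simplex1) : (0, val t) \in std2.
Proof.
case: t => t /set_mem /= /andP[t0 t1]; apply/mem_set; rewrite /std2 /=.
split; [|split]; lra.
Qed.
Lemma face2P (t : simplex1) : (val t, 0) \in std2.
Proof.
case: t => t /set_mem /= /andP[t0 t1]; apply/mem_set; rewrite /std2 /=.
split; [|split]; lra.
Qed.

(** Face maps of the 2-simplex with vertices v0=(0,0), v1=(1,0), v2=(0,1):
    face i is the affine order-preserving map onto the face opposite v_i. *)
Definition face0 (t : simplex1) : simplex2 := SigSub (face0P t).
Definition face1 (t : simplex1) : simplex2 := SigSub (face1P t).
Definition face2 (t : simplex1) : simplex2 := SigSub (face2P t).
End Simplices.

Notation simplex1 R := (set_type (@std1 R)).
Notation simplex2 R := (set_type (@std2 R)).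

Section Cochains.
Variables (R : realType) (X : topologicalType) (A : zmodType).

(** A singular 1-cochain with coefficients in A is a function on singular
    1-simplices; only its values on continuous maps simplex1 -> X matter,
    and all conditions below quantify over continuous simplices only. *)
Definition cochain1 := (simplex1 R -> X) -> A.

Definition path_from_to (x y : X) (gam : simplex1 R -> X) :=
  continuous gam /\ gam (vtx0 R) = x /\ gam (vtx1 R) = y.

Definition path_connected := forall x y : X, exists gam, path_from_to x y gam.

Definition cocycle1 (alpha : cochain1) :=
  forall sigma : simplex2 R -> X, continuous sigma ->
    alpha (sigma \o face0 (R:=R)) - alpha (sigma \o face1 (R:=R))
      + alpha (sigma \o face2 (R:=R)) = 0.

Definition cohomologous1 (alpha beta : cochain1) :=
  exists f : X -> A, forall gam : simplex1 R -> X, continuous gam ->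
    alpha gam - beta gam = f (gam (vtx1 R)) - f (gam (vtx0 R)).

Definition cochain_eq (alpha beta : cochain1) :=
  forall gam : simplex1 R -> X, continuous gam -> alpha gam = beta gam.

Definition pullback (g : X -> X) (alpha : cochain1) : cochain1 :=
  fun gam => alpha (g \o gam).

Definition is_homeo (g : X -> X) :=
  continuous g /\ exists ginv : X -> X,
    continuous ginv /\ cancel g ginv /\ cancel ginv g.

Definition in_Homeo (alpha : cochain1) (g : X -> X) :=
  is_homeo g /\ cohomologous1 (pullback g alpha) alpha.

(** G_{x,alpha}(g,h) := \int_gam (g^*alpha - alpha), gam some path from x to hx
    (a path is chosen; 0 if there is none). *)
Definition Gcoc (x : X) (alpha : cochain1) (g h : X -> X) : A :=
  xget 0 [set a : A | exists gam, path_from_to x (h x) gam /\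
                                  a = pullback g alpha gam - alpha gam].
End Cochains.

Section Cover.
Variable R : realType.

Definition covering_map (Y X : topologicalType) (p : Y -> X) :=
  continuous p /\ (forall x, exists y, p y = x) /\
  forall x : X, exists U : set X, open U /\ U x /\
    exists F : set (set Y),
      (forall V, F V -> open V) /\
      (forall V W, F V -> F W -> V `&` W !=set0 -> V = W) /\
      p @^-1` U = \bigcup_(V in F) V /\
      (forall V, F V -> p @` V = U /\ {in V &, injective p} /\
         exists s : X -> Y, {within U, continuous s} /\
           forall u, U u -> V (s u) /\ p (s u) = u).

Definition simply_connected (Y : topologicalType) :=
  path_connected R Y /\
  forall gam : simplex1 R -> Y, continuous gam -> gam (vtx0 R) = gam (vtx1 R) ->
    exists H : (simplex1 R * simplex1 R)%type -> Y, continuous H /\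
      (forall t, H (t, vtx0 R) = gam t) /\
      (forall t, H (t, vtx1 R) = gam (vtx0 R)) /\
      (forall s, H (vtx0 R, s) = gam (vtx0 R)) /\
      (forall s, H (vtx1 R, s) = gam (vtx0 R)).

Definition has_universal_cover (X : topologicalType) :=
  exists (Y : topologicalType) (p : Y -> X), covering_map p /\ simply_connected Y.
End Cover.

(* For g in Homeo(X, a) the cochain g^*alpha - alpha is exact, say equal to
   delta f_g with f_g : X -> A.  Hence its integral along any path from x to
   hx is f_g(hx) - f_g(x), which gives (2) and (4).  Since
   (gh)^*alpha - alpha = delta (f_h + f_g o h) and, when beta - alpha = delta e,
   g^*beta - beta = delta (f_g + e o g - e), claims (1) and (3) reduce to
   identities in A. *)

From HB Require Import structures.
From mathcomp Require Import all_boot all_order all_algebra.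
From mathcomp Require Import all_classical all_reals all_analysis.
From mathcomp Require Import subtype_topology.
Import Order.TTheory GRing.Theory Num.Theory.
Import numFieldNormedType.Exports.
Set Implicit Arguments. Unset Strict Implicit. Unset Printing Implicit Defensive.
Local Open Scope classical_set_scope.
Local Open Scope ring_scope.

Lemma subrACA (V : zmodType) (a b c d : V) : (a - b) - (c - d) = (a - c) - (b - d).
Proof. by rewrite !opprD !opprK addrACA. Qed.

Lemma subrDD (V : zmodType) (a b c d : V) : (a + b) - (c + d) = (a - c) + (b - d).
Proof. by rewrite opprD addrACA. Qed.

Section GroupCocycle.
Variables (R : realType) (X : topologicalType) (A : zmodType).
Hypothesis connX : path_connected R X.
Implicit Types (alpha beta : cochain1 R X A) (f e : X -> A) (g h k : X -> X) (x y : X).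

Definition coboundary0 f : cochain1 R X A :=
  fun gam => f (gam (vtx1 R)) - f (gam (vtx0 R)).

Definition group_coboundary (phi : (X -> X) -> A) g h : A :=
  phi h - phi (g \o h) + phi g.

Lemma group_coboundaryD (phi psi : (X -> X) -> A) g h :
  group_coboundary (phi \+ psi) g h = group_coboundary phi g h + group_coboundary psi g h.
Proof. by rewrite /group_coboundary /= opprD (addrACA (phi h)) (addrACA (phi h - _)). Qed.

Lemma group_coboundary_orbit (F : X -> A) y g h :
  group_coboundary (fun k => F (k y) - F y) g h = (F (g y) - F y) - (F (g (h y)) - F (h y)).
Proof. by rewrite /group_coboundary subrACA subrr subr0 opprB addrC. Qed.

Lemma pullback_comp_coboundary {alpha g h fg fh} : continuous h ->
  cochain_eq (pullback g alpha \- alpha) (coboundary0 fg) ->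
  cochain_eq (pullback h alpha \- alpha) (coboundary0 fh) ->
  cochain_eq (pullback (g \o h) alpha \- alpha) (coboundary0 (fh \+ (fg \o h))).
Proof.
move=> ch gfg hfh gam cgam.
have chgam : continuous (h \o gam) := fun t => continuous_comp (cgam t) (ch _).
have := gfg _ chgam; have := hfh _ cgam; rewrite /pullback /coboundary0 /= => hgam ghgam.
rewrite -[(g \o h) \o gam]/(g \o (h \o gam)).
by rewrite -(subrKA (alpha (h \o gam)) (alpha (g \o (h \o gam)))) ghgam hgam subrDD addrC.
Qed.

Lemma pullback_cohomologous_coboundary {alpha beta g fg e} : continuous g ->
  cochain_eq (pullback g alpha \- alpha) (coboundary0 fg) ->
  cochain_eq (beta \- alpha) (coboundary0 e) ->
  cochain_eq (pullback g beta \- beta) (coboundary0 (fg \+ ((e \o g) \- e))).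
Proof.
move=> cg gfg be gam cgam.
have cggam : continuous (g \o gam) := fun t => continuous_comp (cgam t) (cg _).
have := be _ cgam; have := be _ cggam; have := gfg _ cgam.
rewrite /pullback /coboundary0 /= => ggam beggam begam.
by rewrite subrDD subrACA -ggam -beggam -begam subrACA subrKC.
Qed.

Lemma Gcoc_eq_const x alpha g h (c : A) :
  (forall gam, path_from_to (R:=R) x (h x) gam -> pullback g alpha gam - alpha gam = c) ->
  Gcoc x alpha g h = c.
Proof.
move=> intc; have [gam xgam] := connX x (h x).
rewrite /Gcoc; set S := (X in xget 0 X).
have : exists a, S a by exists c, gam; rewrite intc.
by move=> /(xgetPex 0) [gam' [xgam' ->]]; exact: intc.
Qed.

Lemma Gcoc_coboundary {x alpha g h f} :
  cochain_eq (pullback g alpha \- alpha) (coboundary0 f) ->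
  Gcoc x alpha g h = f (h x) - f x.
Proof.
move=> gf; apply: Gcoc_eq_const => gam [cgam [gam0 gam1]].
by have := gf _ cgam; rewrite /= /coboundary0 gam0 gam1.
Qed.

Lemma Gcoc_path x alpha g h gam : cohomologous1 (pullback g alpha) alpha ->
  path_from_to x (h x) gam -> Gcoc x alpha g h = pullback g alpha gam - alpha gam.
Proof.
move=> [f gf] [cgam [gam0 gam1]].
by rewrite (Gcoc_coboundary gf) -gam1 -gam0 (gf _ cgam).
Qed.

Lemma Gcoc_pullback_eq0 x alpha g h :
  cochain_eq (pullback g alpha) alpha -> Gcoc x alpha g h = 0.
Proof. by move=> galpha; apply: Gcoc_eq_const => gam [cgam _]; rewrite galpha // subrr. Qed.

Lemma Gcoc_fixed_eq0 x alpha g h : cohomologous1 (pullback g alpha) alpha ->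
  h x = x -> Gcoc x alpha g h = 0.
Proof. by move=> [f gf] hx; rewrite (Gcoc_coboundary gf) hx subrr. Qed.

Lemma Gcoc_cocycle x alpha g h k : in_Homeo alpha g -> in_Homeo alpha h ->
  Gcoc x alpha h k - Gcoc x alpha (g \o h) k + Gcoc x alpha g (h \o k)
    - Gcoc x alpha g h = 0.
Proof.
move=> [_ [fg gfg]] [[ch _] [fh hfh]].
have -> : Gcoc x alpha (g \o h) k = Gcoc x alpha h k + (fg (h (k x)) - fg (h x)).
  by rewrite (Gcoc_coboundary (pullback_comp_coboundary ch gfg hfh)) (Gcoc_coboundary hfh) subrDD.
rewrite !(Gcoc_coboundary gfg) /=.
by rewrite opprD addNKr -addrA subrACA subrr subr0 addNr.
Qed.

Lemma Gcoc_basepoint x y alpha g h del : in_Homeo alpha g -> in_Homeo alpha h ->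
  path_from_to y x del ->
  Gcoc x alpha g h = Gcoc y alpha g h +
    group_coboundary (fun k => alpha del - pullback k alpha del) g h.
Proof.
move=> [_ [fg gfg]] [[ch _] [fh hfh]] [cdel [del0 del1]].
set chi := fun k => _.
have chiE k fk : cochain_eq (pullback k alpha \- alpha) (coboundary0 fk) -> chi k = fk y - fk x.
  move=> kfk; have := kfk _ cdel; rewrite /= /coboundary0 del0 del1.
  by move=> /(congr1 -%R); rewrite !opprB.
have chi_comp : chi (g \o h) = chi h + (fg (h y) - fg (h x)).
  by rewrite (chiE _ _ (pullback_comp_coboundary ch gfg hfh)) (chiE _ _ hfh) subrDD.
rewrite /group_coboundary chi_comp opprD addNKr (chiE _ _ gfg) !(Gcoc_coboundary gfg) opprB.
by rewrite addrCA !subrKA.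
Qed.

Lemma Gcoc_cohomologous y alpha beta e g h : in_Homeo alpha g ->
  cochain_eq (beta \- alpha) (coboundary0 e) ->
  Gcoc y beta g h = Gcoc y alpha g h - group_coboundary (fun k => e (k y) - e y) g h.
Proof.
move=> [[cg _] [fg gfg]] be.
rewrite (Gcoc_coboundary (pullback_cohomologous_coboundary cg gfg be)) (Gcoc_coboundary gfg).
by rewrite /= group_coboundary_orbit subrDD [in RHS]opprB.
Qed.

End GroupCocycle.


Theorem lemma2p1 (R : realType) (X : topologicalType) (A : zmodType)
    (alpha : cochain1 R X A) (x : X) :
  path_connected R X -> has_universal_cover R X -> cocycle1 alpha ->
  (* (1) cocycle identity on Homeo(X, [alpha]) *)
  (forall g h k : X -> X,
     in_Homeo alpha g -> in_Homeo alpha h -> in_Homeo alpha k ->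
     Gcoc x alpha h k - Gcoc x alpha (g \o h) k + Gcoc x alpha g (h \o k)
       - Gcoc x alpha g h = 0) /\
  (* (2) independence of the path *)
  (forall g h : X -> X, in_Homeo alpha g -> in_Homeo alpha h ->
     forall gam, path_from_to x (h x) gam ->
       Gcoc x alpha g h = pullback g alpha gam - alpha gam) /\
  (* (3) the group-cohomology class is independent of x and of the representative *)
  (forall (y : X) (beta : cochain1 R X A), cocycle1 beta -> cohomologous1 beta alpha ->
     exists phi : (X -> X) -> A, forall g h : X -> X,
       in_Homeo alpha g -> in_Homeo alpha h ->
       Gcoc x alpha g h - Gcoc y beta g h = phi h - phi (g \o h) + phi g) /\
  (* (4) vanishing *)
  (forall g h : X -> X, in_Homeo alpha g -> in_Homeo alpha h ->
     cochain_eq (pullback g alpha) alpha \/ h x = x -> Gcoc x alpha g h = 0).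
Proof.
move=> connX _ _; split; [|split; [|split]].
- by move=> g h k gH hH _; exact: Gcoc_cocycle.
- by move=> g h [_ galpha] _ gam xgam; exact: Gcoc_path.
- move=> y beta _ [e be]; have [del ydel] := connX y x.
  exists ((fun k => alpha del - pullback k alpha del) \+ (fun k => e (k y) - e y)).
  move=> g h gH hH; rewrite (Gcoc_basepoint connX gH hH ydel) (Gcoc_cohomologous connX y h gH be).
  by rewrite subrDD subrr add0r opprK -group_coboundaryD.
- move=> g h [_ galpha] _ [gid|hx]; first exact: Gcoc_pullback_eq0.
  exact: Gcoc_fixed_eq0.
Qed.
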